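(* Let $a>0$, $b\ge0$, $\eta>0$, $\alpha>0$. Let $(r_t)_{t\ge0}$ be real numbers with $r_{t+1}\le r_t-\alpha\frac a2r_t^2+\alpha\frac b\eta$, define $\rho_0=r_0$, $\rho_{t+1}=\rho_t-\alpha\frac a2\rho_t^2+\alpha\frac b\eta$, let $\bar\rho=\sqrt{\frac{2b}{\eta a}}$, and define $\nu_0=\rho_0$, $\nu_{t+1}=\big(1-\alpha\frac a2\bar\rho\big)\nu_t+\alpha\frac b\eta$ for $t\ge0$. If $r_0\ge\bar\rho$ and $\alpha\le\frac{1}{a\,r_0}$, then $\nu_t\ge\rho_t$ for all $t\ge0$. *)

From Stdlib Require Import Reals.
Open Scope R_scope.

Fixpoint rho_seq (a b eta alpha r0 : R) (t : nat) : R :=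
  match t with
  | O => r0
  | S t' => let p := rho_seq a b eta alpha r0 t' in
            p - alpha * (a / 2) * p ^ 2 + alpha * (b / eta)
  end.

Definition rho_bar (a b eta : R) : R := sqrt (2 * b / (eta * a)).

Fixpoint nu_seq (a b eta alpha r0 : R) (t : nat) : R :=
  match t with
  | O => r0
  | S t' => (1 - alpha * (a / 2) * rho_bar a b eta) * nu_seq a b eta alpha r0 t'
            + alpha * (b / eta)
  end.

From Stdlib Require Import Reals Lra.
Open Scope R_scope.

(** With [c = alpha a / 2] and [s = rho_bar], the drift [alpha b / eta] equals
    [c s^2], so [rho] iterates [f p = p - c p^2 + c s^2] and [nu] iterates
    [g v = (1 - c s) v + c s^2].  As long as [s <= p <= r0] and [2 c r0 <= 1],
    [f] keeps [p] in [[s, r0]] because [f p - s = (p - s)(1 - c (p + s))], and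
    [g v - f p = (1 - c s)(v - p) + c p (p - s)] is nonnegative once [p <= v],
    so [rho <= nu] propagates by induction. *)

Lemma quad_step_ge_fixpoint (c s p : R) :
  0 <= c -> s <= p -> c * (p + s) <= 1 -> s <= p - c * p ^ 2 + c * s ^ 2.
Proof.
  intros hc hsp hcps.
  assert (E : p - c * p ^ 2 + c * s ^ 2 - s = (p - s) * (1 - c * (p + s))) by ring.
  nra.
Qed.

Lemma quad_step_le (c s p : R) :
  0 <= c -> 0 <= s <= p -> p - c * p ^ 2 + c * s ^ 2 <= p.
Proof. intros hc hsp. assert (0 <= c * ((p - s) * (p + s))) by (apply Rmult_le_pos; nra). nra. Qed.

Lemma quad_step_le_lin_step (c s p v : R) :
  0 <= c -> 0 <= s <= p -> c * s <= 1 -> p <= v ->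
  p - c * p ^ 2 + c * s ^ 2 <= (1 - c * s) * v + c * s ^ 2.
Proof.
  intros hc hsp hcs hpv.
  assert (E : (1 - c * s) * v + c * s ^ 2 - (p - c * p ^ 2 + c * s ^ 2)
              = (1 - c * s) * (v - p) + c * p * (p - s)) by ring.
  assert (0 <= c * p) by nra.
  nra.
Qed.

Lemma rho_bar_ge0 (a b eta : R) : 0 <= rho_bar a b eta.
Proof. apply sqrt_pos. Qed.

Lemma drift_eq_rho_bar_sq (a b eta alpha : R) :
  0 < a -> 0 <= b -> 0 < eta ->
  alpha * (b / eta) = alpha * (a / 2) * rho_bar a b eta ^ 2.
Proof.
  intros ha hb heta.
  unfold rho_bar. rewrite pow2_sqrt.
  - field. lra.
  - apply Rmult_le_pos; [lra|].
    apply Rlt_le, Rinv_0_lt_compat, Rmult_lt_0_compat; lra.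
Qed.

(* Since [1 / 0 = 0] in Rocq, [0 < alpha <= 1 / (a r0)] already forces [r0 > 0]. *)
Lemma step_size_bound (a alpha r0 : R) :
  0 < a -> 0 < alpha -> alpha <= 1 / (a * r0) -> alpha * a * r0 <= 1.
Proof.
  intros ha halpha hstep.
  destruct (Rle_or_lt r0 0) as [hr0 | hr0].
  - assert (0 <= alpha * a) by nra. nra.
  - assert (hpos : 0 < a * r0) by nra.
    apply Rmult_le_compat_r with (r := a * r0) in hstep; [|lra].
    unfold Rdiv in hstep. rewrite Rmult_1_l, Rinv_l in hstep by lra. lra.
Qed.

Section Comparison.

Variables a b eta alpha r0 : R.
Hypothesis ha : 0 < a.
Hypothesis hb : 0 <= b.
Hypothesis heta : 0 < eta.
Hypothesis halpha : 0 < alpha.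
Hypothesis hr0 : rho_bar a b eta <= r0.
Hypothesis hstep : alpha * a * r0 <= 1.

Local Notation c := (alpha * (a / 2)).
Local Notation s := (rho_bar a b eta).
Local Notation rho := (rho_seq a b eta alpha r0).
Local Notation nu := (nu_seq a b eta alpha r0).

Lemma rho_seq_S (t : nat) : rho (S t) = rho t - c * rho t ^ 2 + c * s ^ 2.
Proof. simpl. rewrite (drift_eq_rho_bar_sq a b eta alpha) by assumption. reflexivity. Qed.

Lemma nu_seq_S (t : nat) : nu (S t) = (1 - c * s) * nu t + c * s ^ 2.
Proof. simpl. rewrite (drift_eq_rho_bar_sq a b eta alpha) by assumption. reflexivity. Qed.

Lemma rho_seq_between (t : nat) : s <= rho t <= r0.
Proof.
  assert (hs := rho_bar_ge0 a b eta).
  assert (hc : 0 <= c) by nra.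
  induction t as [|t [hlo hhi]]; [simpl; split; [exact hr0 | lra]|].
  rewrite rho_seq_S. split.
  - apply quad_step_ge_fixpoint; [assumption | assumption | nra].
  - assert (rho t - c * rho t ^ 2 + c * s ^ 2 <= rho t) by (apply quad_step_le; lra).
    lra.
Qed.

Lemma rho_seq_le_nu_seq (t : nat) : rho t <= nu t.
Proof.
  assert (hs := rho_bar_ge0 a b eta).
  assert (hc : 0 <= c) by nra.
  induction t as [|t IH]; [simpl; lra|].
  destruct (rho_seq_between t) as [hlo hhi].
  rewrite rho_seq_S, nu_seq_S.
  apply quad_step_le_lin_step; [assumption | split; [exact hs | exact hlo] | nra | assumption].
Qed.

End Comparison.

Theorem lemmaC9 (a b eta alpha : R) (r : nat -> R)
  (ha : 0 < a) (hb : 0 <= b) (heta : 0 < eta) (halpha : 0 < alpha)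
  (hr : forall t : nat,
      r (S t) <= r t - alpha * (a / 2) * (r t) ^ 2 + alpha * (b / eta))
  (hr0 : rho_bar a b eta <= r 0%nat)
  (hstep : alpha <= 1 / (a * r 0%nat)) :
  forall t : nat, rho_seq a b eta alpha (r 0%nat) t <= nu_seq a b eta alpha (r 0%nat) t.
Proof.
  intro t.
  apply rho_seq_le_nu_seq; try assumption.
  now apply step_size_bound.
Qed.
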